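(* Let $q$ be the semi-Markov kernel of a homogeneous $d$-dimensional multi-time Markov renewal chain, let $u=(\mathbbm{I}_s-q)^{(-1)}=\sum_{n\ge0}q^{(n)}$, and let $G\in\mathcal{M}_s(\mathbb{N}^d)$ be given. Then the multi-time Markov renewal equation $L=G+q*L$ in the unknown $L\in\mathcal{M}_s(\mathbb{N}^d)$ has a unique solution, given by $L=u*G$.
   Context: $E=\{1,\dots,s\}$; $\mathcal{M}_s(\mathbb{N}^d)$ is the set of functions $\mathbb{N}^d\to\mathbb{R}^{s\times s}$, with convolution $[A*B](k)=\sum_{l+l'=k}A(l)B(l')$, identity $\mathbbm{I}_s$ ($\mathbbm{I}_s(0_d)=I_s$, zero elsewhere), powers $A^{(0)}=\mathbbm{I}_s$, $A^{(n)}=A*A^{(n-1)}$, convolutional inverse $A^{(-1)}$. A homogeneous $d$-dimensional multi-time Markov renewal chain is a process $(J_n,S_n)_{n\in\mathbb{N}}$, $J_n\in E$, $S_n\in\mathbb{N}^d$, $S_0=0_d$, $S_n<S_{n+1}$ (componentwise $\le$, not equal), with a.s. $\mathbb{P}(J_{n+1}=j,S_{n+1}-S_n=k\mid J_{0:n},S_{0:n})=q_{J_nj}(k)$ where $q_{ij}(k)=\mathbb{P}(J_{n+1}=j,S_{n+1}-S_n=k\mid J_n=i)$ is independent of $n$ (so $q(0_d)=O_s$). *)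

From HB Require Import structures.
From mathcomp Require Import all_boot all_order all_algebra.
From mathcomp Require Import all_classical all_reals all_analysis.
Set Implicit Arguments. Unset Strict Implicit. Unset Printing Implicit Defensive.
Import Order.TTheory GRing.Theory Num.Theory.
Local Open Scope classical_set_scope.
Local Open Scope ring_scope.

Definition Nd (d : nat) := 'I_d -> nat.

Definition Mfun (R : realType) (s d : nat) := Nd d -> 'M[R]_s.

Section Defs.
Variables (R : realType) (s d : nat).

Definition zeroNd : Nd d := fun _ => 0%N.

Definition ndmax (k : Nd d) : nat := \max_(i < d) k i.

Definition leNd (l k : Nd d) : bool := [forall i, (l i <= k i)%N].

(* Convolution [A*B](k) = sum_{l + l' = k} A(l) B(l'), the sum being over the
   l <= k (componentwise), l' = k - l; the l range over the box [0, max k]^d. *)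
Definition mconv (A B : Mfun R s d) : Mfun R s d := fun k =>
  \sum_(l : {ffun 'I_d -> 'I_(ndmax k).+1} |
         leNd (fun i => nat_of_ord (l i)) k)
     A (fun i => nat_of_ord (l i)) *m B (fun i => (k i - l i)%N).

Definition convI : Mfun R s d := fun k => if [forall i, k i == 0%N] then 1%:M else 0.

Fixpoint conv_pow (A : Mfun R s d) (n : nat) : Mfun R s d :=
  match n with
  | 0 => convI
  | n'.+1 => mconv A (conv_pow A n')
  end.

Definition renewal_u (q : Mfun R s d) : Mfun R s d := fun k =>
  \matrix_(i, j) lim ((fun N => \sum_(n < N) conv_pow q n k i j) @ \oo).

(* Semi-Markov kernel of a homogeneous d-dimensional multi-time Markov renewal
   chain: q_ij(k) = P(J_{n+1}=j, S_{n+1}-S_n=k | J_n=i); so entries are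
   nonnegative, q(0_d) = O_s (since S_n < S_{n+1}), and for each i the total
   mass sum_j sum_k q_ij(k) equals 1 (partial sums over boxes [0,N]^d tend
   to 1). *)
Definition semi_markov_kernel (q : Mfun R s d) : Prop :=
  [/\ forall k i j, 0 <= q k i j,
      q zeroNd = 0 &
      forall i : 'I_s,
        (fun N : nat => (\sum_(j < s)
            \sum_(l : {ffun 'I_d -> 'I_N.+1}) q (fun x => nat_of_ord (l x)) i j : R))
        @ \oo --> (1%R : R^o)].

End Defs.

From HB Require Import structures.
From mathcomp Require Import all_boot all_order all_algebra.
From mathcomp Require Import all_classical all_reals all_analysis.
Import Order.TTheory GRing.Theory Num.Theory.
Local Open Scope classical_set_scope.
Local Open Scope ring_scope.

(* Of the kernel hypotheses only q(0_d) = O_s matters: it makes (q * X)(k)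
   depend only on the values of X at multi-indices of smaller total size
   ndsum, so q^(n)(k) = 0 as soon as n > ndsum k.  Hence the series u is
   locally a finite sum and satisfies u = I + q * u, so u * G solves the
   renewal equation by associativity of the convolution; the difference X of
   two solutions satisfies X = q * X and vanishes by induction on ndsum. *)

Set Implicit Arguments. Unset Strict Implicit.

Section MultiIndices.
Variable d : nat.
Implicit Types k l m n : Nd d.

Definition addNd l m : Nd d := fun i => (l i + m i)%N.
Definition subNd k l : Nd d := fun i => (k i - l i)%N.
Definition eqNd l m : bool := [forall i, l i == m i].
Definition ndsum k : nat := \sum_(i < d) k i.

Lemma eqNdP l m : reflect (l = m) (eqNd l m).
Proof.
apply: (iffP forallP) => [lm|-> i //]; apply: funext => i; exact/eqP.
Qed.

Lemma addNdA : associative addNd.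
Proof. by move=> l m n; apply: funext => i; rewrite /addNd addnA. Qed.

Lemma leNd_trans m l n : leNd l m -> leNd m n -> leNd l n.
Proof. by move=> /forallP lm /forallP mn; apply/forallP => i; apply: leq_trans (mn i). Qed.

Lemma leNd_addr l m : leNd l (addNd l m).
Proof. by apply/forallP => i; apply: leq_addr. Qed.

Lemma leNd_addl l m : leNd m (addNd l m).
Proof. by apply/forallP => i; apply: leq_addl. Qed.

Lemma leNd_subr k l : leNd (subNd k l) k.
Proof. by apply/forallP => i; apply: leq_subr. Qed.

Lemma eqNd_addE l m k : eqNd (addNd l m) k = leNd l k && eqNd (subNd k l) m.
Proof.
apply/eqNdP/andP => [<-|[/forallP lk /eqNdP <-]]; last first.
  by apply: funext => i; rewrite /addNd /subNd subnKC.
split; first exact: leNd_addr.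
by apply/eqNdP/funext => i; rewrite /subNd /addNd addKn.
Qed.

Lemma leNd_ndmax k N : leNd k (fun=> N) = (ndmax k <= N)%N.
Proof. by apply/forallP/bigmax_leqP => kN i //; apply: kN. Qed.

Lemma leNd_box x k N : leNd x k -> (ndmax k <= N)%N -> leNd x (fun=> N).
Proof. by rewrite -leNd_ndmax; apply: leNd_trans. Qed.

Lemma ndsum_le l k : leNd l k -> (ndsum l <= ndsum k)%N.
Proof. by move=> /forallP lk; apply: leq_sum => i _; apply: lk. Qed.

Lemma ndsum_subNd_lt k l : leNd l k -> ~~ eqNd l (@zeroNd d) ->
  (ndsum (subNd k l) < ndsum k)%N.
Proof.
move=> /forallP lk; rewrite negb_forall => /existsP [i li0].
have <- : (ndsum (subNd k l) + ndsum l = ndsum k)%N.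
  by rewrite -big_split; apply: eq_bigr => j _; rewrite /= /subNd subnK.
by rewrite -[X in (X < _)%N]addn0 ltn_add2l /ndsum (bigD1 i) //= addn_gt0 lt0n li0.
Qed.

End MultiIndices.

Section Boxes.
Variable d : nat.
Local Notation box N := {ffun 'I_d -> 'I_N.+1}.

Definition nd_of N (l : box N) : Nd d := fun i => l i.
Definition box_of N (x : Nd d) : box N := [ffun i => inord (x i)].

Lemma nd_of_le N (l : box N) : leNd (nd_of l) (fun=> N).
Proof. by apply/forallP => i; rewrite /nd_of -ltnS. Qed.

Lemma nd_of_boxK N x : leNd x (fun=> N) -> nd_of (box_of N x) = x.
Proof.
by move=> /forallP xN; apply: funext => i; rewrite /nd_of ffunE inordK ?ltnS.
Qed.

Lemma box_of_ndK N : cancel (@nd_of N) (box_of N).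
Proof. by move=> l; apply/ffunP => i; apply: val_inj; rewrite ffunE inord_val. Qed.

Lemma sum_box_eqNd (V : nmodType) N x (F : Nd d -> V) :
  \sum_(l : box N) (if eqNd x (nd_of l) then F (nd_of l) else 0)
  = if leNd x (fun=> N) then F x else 0.
Proof.
case: ifPn => [xN|xNN].
  rewrite (bigD1 (box_of N x)) //= nd_of_boxK // big1 => [|l lx].
    by case: eqNdP => [_|//]; rewrite addr0.
  by case: eqNdP => // xl; rewrite xl box_of_ndK eqxx in lx.
by rewrite big1 // => l _; case: eqNdP => // xl; rewrite xl nd_of_le in xNN.
Qed.

Lemma sum_box_widen (V : nmodType) N M (F : Nd d -> V) : (N <= M)%N ->
  (forall x, F x != 0 -> leNd x (fun=> N)) ->
  \sum_(l : box M) F (nd_of l) = \sum_(l : box N) F (nd_of l).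
Proof.
move=> NM suppF.
have le_M (l : box N) : leNd (nd_of l) (fun=> M).
  by apply: leNd_trans (nd_of_le l) _; apply/forallP.
rewrite (bigID (fun l : box M => leNd (nd_of l) (fun=> N))) /=.
rewrite [X in _ + X]big1 ?addr0 => [|l]; last first.
  by apply: contraNeq; apply: suppF.
rewrite (reindex_onto (box_of M \o @nd_of N) (box_of N \o @nd_of M)) /= => [|l lN].
  apply: eq_big => [l|l _]; last by rewrite nd_of_boxK ?le_M.
  by rewrite nd_of_boxK ?le_M // nd_of_le box_of_ndK eqxx.
by rewrite nd_of_boxK ?le_M // box_of_ndK.
Qed.

End Boxes.

Section Convolution.
Variables (R : realType) (s d : nat).
Local Notation box N := {ffun 'I_d -> 'I_N.+1}.
Implicit Types A B C : Mfun R s d.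

(* Enlarging the box [0, ndmax k]^d of the definition to a box common to all
   multi-indices below k lets nested convolutions be exchanged. *)
Lemma mconv_box A B k N : (ndmax k <= N)%N ->
  mconv A B k = \sum_(l : box N) \sum_(m : box N)
    (if eqNd (addNd (nd_of l) (nd_of m)) k then A (nd_of l) *m B (nd_of m) else 0).
Proof.
move=> kN; pose F x := if leNd x k then A x *m B (subNd k x) else 0.
have inner (l : box N) : \sum_(m : box N)
    (if eqNd (addNd (nd_of l) (nd_of m)) k then A (nd_of l) *m B (nd_of m) else 0)
    = F (nd_of l).
  rewrite /F; case: ifP => lk; under eq_bigr do rewrite eqNd_addE lk //=.
    by rewrite (sum_box_eqNd _ _ (fun m => A (nd_of l) *m B m)) (leNd_box (leNd_subr _ _) kN).
  by rewrite big1.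
under eq_bigr do rewrite inner.
rewrite (sum_box_widen (F := F) kN) => [|x]; first by rewrite /mconv big_mkcond.
by rewrite /F; case: ifP => [xk _|_]; [apply: leNd_box xk _|rewrite eqxx].
Qed.

Lemma mconv_mconvl_box A B C k N : (ndmax k <= N)%N ->
  mconv (mconv A B) C k = \sum_(l : box N) \sum_(m : box N) \sum_(n : box N)
    (if eqNd (addNd (addNd (nd_of l) (nd_of m)) (nd_of n)) k
     then A (nd_of l) *m B (nd_of m) *m C (nd_of n) else 0).
Proof.
move=> kN; rewrite (mconv_box _ _ kN).
pose T l m n p := if eqNd (addNd p n) k then A l *m B m *m C n else 0.
have expand (p n : box N) :
    (if eqNd (addNd (nd_of p) (nd_of n)) k
     then mconv A B (nd_of p) *m C (nd_of n) else 0)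
    = \sum_(l : box N) \sum_(m : box N)
        (if eqNd (addNd (nd_of l) (nd_of m)) (nd_of p)
         then T (nd_of l) (nd_of m) (nd_of n) (nd_of p) else 0).
  rewrite /T; case: eqNdP => [pnk|_]; last first.
    by rewrite big1 // => l _; rewrite big1 // => m _; case: ifP.
  have pN : (ndmax (nd_of p) <= N)%N.
    by rewrite -leNd_ndmax (leNd_box _ kN) // -pnk leNd_addr.
  rewrite (mconv_box _ _ pN) mulmx_suml; apply: eq_bigr => l _.
  by rewrite mulmx_suml; apply: eq_bigr => m _; case: ifP; rewrite ?mul0mx.
under eq_bigr do under eq_bigr do rewrite expand.
rewrite exchange_big; under eq_bigr do rewrite exchange_big.
under eq_bigr do under eq_bigr do rewrite exchange_big.
rewrite exchange_big; under eq_bigr do rewrite exchange_big.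
apply: eq_bigr => l _; apply: eq_bigr => m _; apply: eq_bigr => n _.
rewrite (sum_box_eqNd _ _ (T (nd_of l) (nd_of m) (nd_of n))) /T.
case: eqNdP => [lmnk|_]; last by case: ifP.
by rewrite (leNd_box _ kN) // -lmnk leNd_addr.
Qed.

Lemma mconv_mconvr_box A B C k N : (ndmax k <= N)%N ->
  mconv A (mconv B C) k = \sum_(l : box N) \sum_(m : box N) \sum_(n : box N)
    (if eqNd (addNd (addNd (nd_of l) (nd_of m)) (nd_of n)) k
     then A (nd_of l) *m B (nd_of m) *m C (nd_of n) else 0).
Proof.
move=> kN; rewrite (mconv_box _ _ kN).
pose T l m n p := if eqNd (addNd l p) k then A l *m B m *m C n else 0.
have expand (l p : box N) :
    (if eqNd (addNd (nd_of l) (nd_of p)) k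
     then A (nd_of l) *m mconv B C (nd_of p) else 0)
    = \sum_(m : box N) \sum_(n : box N)
        (if eqNd (addNd (nd_of m) (nd_of n)) (nd_of p)
         then T (nd_of l) (nd_of m) (nd_of n) (nd_of p) else 0).
  rewrite /T; case: eqNdP => [lpk|_]; last first.
    by rewrite big1 // => m _; rewrite big1 // => n _; case: ifP.
  have pN : (ndmax (nd_of p) <= N)%N.
    by rewrite -leNd_ndmax (leNd_box _ kN) // -lpk leNd_addl.
  rewrite (mconv_box _ _ pN) mulmx_sumr; apply: eq_bigr => m _.
  by rewrite mulmx_sumr; apply: eq_bigr => n _; case: ifP; rewrite ?mulmx0 ?mulmxA.
under eq_bigr do under eq_bigr do rewrite expand.
under eq_bigr do rewrite exchange_big.
under eq_bigr do under eq_bigr do rewrite exchange_big.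
apply: eq_bigr => l _; apply: eq_bigr => m _; apply: eq_bigr => n _.
rewrite (sum_box_eqNd _ _ (T (nd_of l) (nd_of m) (nd_of n))) /T addNdA.
case: eqNdP => [lmnk|_]; last by case: ifP.
by rewrite (leNd_box _ kN) // -lmnk -addNdA leNd_addl.
Qed.

Lemma mconvA A B C k : mconv (mconv A B) C k = mconv A (mconv B C) k.
Proof.
by rewrite (mconv_mconvl_box _ _ _ (leqnn _)) (mconv_mconvr_box _ _ _ (leqnn _)).
Qed.

End Convolution.

Section ConvolutionAlgebra.
Variables (R : realType) (s d : nat).
Implicit Types A B C : Mfun R s d.

Lemma mconv1l B k : mconv (@convI R s d) B k = B k.
Proof.
rewrite /mconv (bigD1 [ffun=> ord0]) /=; last by apply/forallP => i; rewrite ffunE.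
rewrite /convI big1 => [|l /andP [_ l0]].
  have -> : [forall i, ([ffun=> ord0] : {ffun 'I_d -> 'I_(ndmax k).+1}) i == 0 :> nat].
    by apply/forallP => i; rewrite ffunE.
  by rewrite mul1mx addr0; congr B; apply: funext => i; rewrite ffunE subn0.
case: ifPn => [/forallP l_eq0|_]; last by rewrite mul0mx.
by case/eqP: l0; apply/ffunP => i; apply: val_inj; rewrite ffunE /= (eqP (l_eq0 i)).
Qed.

Lemma mconvDl A B C k :
  mconv (fun x => A x + B x) C k = mconv A C k + mconv B C k.
Proof. by rewrite /mconv -big_split; apply: eq_bigr => l _; rewrite mulmxDl. Qed.

Lemma mconvBr A B C k :
  mconv A (fun x => B x - C x) k = mconv A B k - mconv A C k.
Proof. by rewrite /mconv -sumrB; apply: eq_bigr => l _; rewrite mulmxBr. Qed.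

Lemma mconv_sumr A (F : nat -> Mfun R s d) K k :
  mconv A (fun x => \sum_(n < K) F n x) k = \sum_(n < K) mconv A (F n) k.
Proof. by rewrite /mconv exchange_big; apply: eq_bigr => l _; rewrite mulmx_sumr. Qed.

Lemma eq_mconvr A B B' k : (forall l, leNd l k -> B l = B' l) ->
  mconv A B k = mconv A B' k.
Proof. by move=> BB'; apply: eq_bigr => l _; rewrite BB' // leNd_subr. Qed.

End ConvolutionAlgebra.

Section RenewalEquation.
Variables (R : realType) (s d : nat) (q : Mfun R s d).
Hypothesis q0 : q (@zeroNd d) = 0.
Implicit Types G L X : Mfun R s d.

Lemma mconv_eq0_lower X k : (forall m, (ndsum m < ndsum k)%N -> X m = 0) ->
  mconv q X k = 0.
Proof.
move=> X0; rewrite /mconv big1 // => l lk.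
have [l0|/eqNdP l0] := eqNdP (fun i => nat_of_ord (l i)) (@zeroNd d).
  by rewrite l0 q0 mul0mx.
by rewrite X0 ?mulmx0 // ndsum_subNd_lt.
Qed.

Lemma conv_pow_eq0 n k : (ndsum k < n)%N -> conv_pow q n k = 0.
Proof.
elim: n k => [//|n IHn] k kn /=.
by apply: mconv_eq0_lower => m mk; apply: IHn; apply: leq_trans mk _; rewrite -ltnS.
Qed.

Definition conv_pow_sum K : Mfun R s d := fun k => \sum_(n < K) conv_pow q n k.

Lemma conv_pow_sumS K k :
  conv_pow_sum K.+1 k = @convI R s d k + mconv q (conv_pow_sum K) k.
Proof. by rewrite /conv_pow_sum big_ord_recl mconv_sumr. Qed.

Lemma renewal_uE K k : (ndsum k < K)%N -> renewal_u q k = conv_pow_sum K k.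
Proof.
move=> kK; apply/matrixP => i j; rewrite mxE summxE.
apply: (lim_near_cst (@norm_hausdorff _ _)); exists K => // N /= KN.
rewrite (big_ord_widen N (fun n => conv_pow q n k i j) KN) [RHS]big_mkcond.
apply: eq_bigr => n _; case: ifPn => //; rewrite -leqNgt => Kn.
by rewrite conv_pow_eq0 ?mxE // (leq_trans kK).
Qed.

Lemma renewal_u_fix :
  renewal_u q = fun k => @convI R s d k + mconv q (renewal_u q) k.
Proof.
apply: funext => k; rewrite (@renewal_uE (ndsum k).+2) // conv_pow_sumS.
congr (_ + _); apply: eq_mconvr => l lk.
by rewrite (@renewal_uE (ndsum k).+1) // ltnS ndsum_le.
Qed.

Lemma renewal_solution G :
  mconv (renewal_u q) G = fun k => G k + mconv q (mconv (renewal_u q) G) k.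
Proof. by apply: funext => k; rewrite {1}renewal_u_fix mconvDl mconv1l mconvA. Qed.

Lemma renewal_homogeneous_eq0 X : (forall k, X k = mconv q X k) -> X = fun=> 0.
Proof.
move=> Xfix; apply: funext => k.
have [n kn] : exists n, (ndsum k < n)%N by exists (ndsum k).+1.
elim: n k kn => [//|n IHn] k kn; rewrite Xfix; apply: mconv_eq0_lower => m mk.
by apply: IHn; apply: leq_trans mk _; rewrite -ltnS.
Qed.

Lemma renewal_solution_unique G (L1 L2 : Mfun R s d) :
  L1 = (fun k => G k + mconv q L1 k) -> L2 = (fun k => G k + mconv q L2 k) ->
  L1 = L2.
Proof.
move=> L1_sol L2_sol.
have L12 : (fun k => L1 k - L2 k) = fun=> 0.
  apply: renewal_homogeneous_eq0 => k.
  by rewrite mconvBr {1}L1_sol {1}L2_sol /= opprD addrACA subrr add0r.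
apply: funext => k; apply/eqP; rewrite -subr_eq0; apply/eqP.
exact: (congr1 (@^~ k) L12).
Qed.

End RenewalEquation.

Theorem corollary3 (R : realType) (s d : nat) (q G : Mfun R s d) :
  semi_markov_kernel q ->
  forall L : Mfun R s d,
    (L = fun k => G k + mconv q L k) <-> L = mconv (renewal_u q) G.
Proof.
case=> _ q0 _ L; have uG_sol := renewal_solution q0 G.
split=> [L_sol|->]; last exact: uG_sol.
exact: (renewal_solution_unique q0 L_sol uG_sol).
Qed.
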